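(* Let $d\ge2$ and for real $\eta,\beta$ let $\rho(\eta,\beta)=(1-\eta-\beta)\frac{\mathbb{I}}{d^2}+\eta\frac{V}{d}+\beta\frac{V^{T_A}}{d}$ on $\mathbb{C}^d\otimes\mathbb{C}^d$. Then $\rho(\eta,\beta)$ is local-positive if and only if $$-\frac{1}{d-1}\le\eta+\beta\le1,\qquad -(d-1)\eta+\beta\le1,\qquad \eta-(d-1)\beta\le1.$$
   Context: $V=\sum_{i,j}|ij\rangle\langle ji|$ is the swap operator and $V^{T_A}=\sum_{i,j}|ii\rangle\langle jj|$ its partial transpose on the first factor in a fixed orthonormal basis. An operator $M$ on $\mathcal{H}_A\otimes\mathcal{H}_B$ is local-positive if $\operatorname{Tr}(M\,P_A\otimes P_B)\ge0$ for all rank-one projectors $P_A$ on $\mathcal{H}_A$ and $P_B$ on $\mathcal{H}_B$. *)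

(* Scalars: an arbitrary numClosedFieldType C (e.g. algC);
   the theorem is purely algebraic, so this generalizes C = complex numbers. *)
From HB Require Import structures.
From mathcomp Require Import all_boot all_order all_algebra.
Set Implicit Arguments. Unset Strict Implicit. Unset Printing Implicit Defensive.
Import Order.TTheory GRing.Theory Num.Theory.
Local Open Scope ring_scope.

Section Defs.
Variable C : numClosedFieldType.

(* basis |i j> of C^m (x) C^n is indexed by mxvec_index i j : 'I_(m*n);
   idx_pair is the inverse decoding *)
Definition idx_pair (m n : nat) (k : 'I_(m * n)) : 'I_m * 'I_n :=
  enum_val (cast_ord (esym (@mxvec_cast m n)) k).

Definition tens (m n : nat) (A : 'M[C]_m) (B : 'M[C]_n) : 'M[C]_(m * n) :=
  \matrix_(k, l) (A (idx_pair k).1 (idx_pair l).1 * B (idx_pair k).2 (idx_pair l).2).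

Definition adjmx (m n : nat) (A : 'M[C]_(m, n)) : 'M[C]_(n, m) :=
  map_mx (fun x => x^*) A^T.

Definition rank_one_projector (n : nat) (P : 'M[C]_n) : Prop :=
  adjmx P = P /\ P *m P = P /\ \rank P = 1%N.

Definition swapV (d : nat) : 'M[C]_(d * d) :=
  \sum_(i < d) \sum_(j < d) delta_mx (mxvec_index i j) (mxvec_index j i).

(* partial transpose on the first factor: V^{T_A} = sum_{i,j} |ii><jj| *)
Definition swapV_TA (d : nat) : 'M[C]_(d * d) :=
  \sum_(i < d) \sum_(j < d) delta_mx (mxvec_index i i) (mxvec_index j j).

Definition local_positive (m n : nat) (M : 'M[C]_(m * n)) : Prop :=
  forall (PA : 'M[C]_m) (PB : 'M[C]_n),
    rank_one_projector PA -> rank_one_projector PB ->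
    0 <= \tr (M *m tens PA PB).

Definition rho (d : nat) (eta beta : C) : 'M[C]_(d * d) :=
  ((1 - eta - beta) / (d%:R ^+ 2)) *: 1%:M
  + (eta / d%:R) *: swapV d + (beta / d%:R) *: swapV_TA d.

End Defs.

From HB Require Import structures.
From mathcomp Require Import all_boot all_order all_algebra.
From mathcomp Require Import ring.
Set Implicit Arguments. Unset Strict Implicit. Unset Printing Implicit Defensive.
Import Order.TTheory GRing.Theory Num.Theory.
Local Open Scope ring_scope.

(** For rank-one projectors P_A, P_B, the number d^2 Tr(rho (P_A (x) P_B)) is the
    affine function 1 - eta - beta + d eta x + d beta y of x = Tr(P_A P_B) and
    y = Tr(P_A^T P_B), and both x and y lie in [0, 1].  An affine function is
    nonnegative on the unit square iff it is nonnegative at the four corners,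
    and every corner is attained by unit vectors spanned by e_0 and e_1: take
    (e_0, e_0), (e_1, e_0), (f, f) and (conj f, f) with
    f = ((1 + i) e_0 + (1 - i) e_1) / 2, which is orthogonal to conj f.
    The four corner conditions are the four inequalities of the theorem. *)

Lemma affine_ge0_on_unit_square (R : numDomainType) (a b c x y : R) :
    0 <= a -> 0 <= a + b -> 0 <= a + c -> 0 <= a + b + c ->
    0 <= x <= 1 -> 0 <= y <= 1 -> 0 <= a + b * x + c * y.
Proof.
move=> a00 a10 a01 a11 /andP[x0 x1] /andP[y0 y1].
rewrite -subr_ge0 in x1; rewrite -subr_ge0 in y1.
have -> : a + b * x + c * y = (1 - x) * (1 - y) * a + x * (1 - y) * (a + b)
    + (1 - x) * y * (a + c) + x * y * (a + b + c) by ring.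
by rewrite !addr_ge0 // !mulr_ge0.
Qed.

Section LocalPositivity.
Variable C : numClosedFieldType.

Lemma idx_pairK m n (i : 'I_m) (j : 'I_n) : idx_pair (mxvec_index i j) = (i, j).
Proof. by rewrite /idx_pair /mxvec_index cast_ordK enum_rankK. Qed.

Lemma mxvec_index_pair m n (k : 'I_(m * n)) :
  mxvec_index (idx_pair k).1 (idx_pair k).2 = k.
Proof. by case: k / (mxvec_indexP k) => i j; rewrite idx_pairK. Qed.

Lemma big_mxvec_index m n (F : 'I_(m * n) -> C) :
  \sum_k F k = \sum_(i < m) \sum_(j < n) F (mxvec_index i j).
Proof.
rewrite pair_big (reindex (fun p : 'I_m * 'I_n => mxvec_index p.1 p.2)) //=.
exists (@idx_pair m n) => [[i j] _|k _]; first by rewrite idx_pairK.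
exact: mxvec_index_pair.
Qed.

Lemma tens_mxvec_index m n (A : 'M[C]_m) (B : 'M[C]_n) i j k l :
  tens A B (mxvec_index i j) (mxvec_index k l) = A i k * B j l.
Proof. by rewrite /tens mxE !idx_pairK. Qed.

Lemma mxtrace_delta_mul n (a b : 'I_n) (T : 'M[C]_n) :
  \tr (delta_mx a b *m T) = T b a.
Proof.
rewrite /mxtrace (bigD1 a) //= big1 => [|i ia]; last first.
  by rewrite mxE big1 // => k _; rewrite mxE (negbTE ia) mul0r.
rewrite addr0 mxE (bigD1 b) //= big1 => [|k kb]; last first.
  by rewrite !mxE eqxx (negbTE kb) mul0r.
by rewrite !mxE !eqxx mul1r addr0.
Qed.

Lemma mxtrace_tens m n (A : 'M[C]_m) (B : 'M[C]_n) :
  \tr (tens A B) = \tr A * \tr B.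
Proof.
rewrite {1}/mxtrace big_mxvec_index /mxtrace big_distrl /=.
apply: eq_bigr => i _; rewrite big_distrr /=.
by apply: eq_bigr => j _; rewrite tens_mxvec_index.
Qed.

Lemma mxtrace_swapV_tens d (A B : 'M[C]_d) :
  \tr (swapV C d *m tens A B) = \tr (A *m B).
Proof.
rewrite /swapV mulmx_suml raddf_sum /=.
under eq_bigr do rewrite mulmx_suml raddf_sum /=.
under eq_bigr do under eq_bigr do rewrite mxtrace_delta_mul tens_mxvec_index.
rewrite exchange_big /mxtrace.
by apply: eq_bigr => i _; rewrite mxE.
Qed.

Lemma mxtrace_swapV_TA_tens d (A B : 'M[C]_d) :
  \tr (swapV_TA C d *m tens A B) = \tr (A^T *m B).
Proof.
rewrite /swapV_TA mulmx_suml raddf_sum /=.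
under eq_bigr do rewrite mulmx_suml raddf_sum /=.
under eq_bigr do under eq_bigr do rewrite mxtrace_delta_mul tens_mxvec_index.
rewrite /mxtrace; apply: eq_bigr => i _; rewrite mxE.
by apply: eq_bigr => j _; rewrite mxE.
Qed.

Lemma mxtrace_rho_tens d eta beta (A B : 'M[C]_d) :
  \tr (rho d eta beta *m tens A B) =
  (1 - eta - beta) / d%:R ^+ 2 * (\tr A * \tr B)
  + eta / d%:R * \tr (A *m B) + beta / d%:R * \tr (A^T *m B).
Proof.
rewrite /rho !mulmxDl !mxtraceD -!scalemxAl !mxtraceZ mul1mx.
by rewrite mxtrace_tens mxtrace_swapV_tens mxtrace_swapV_TA_tens.
Qed.

Lemma adjmxM m n p (A : 'M[C]_(m, n)) (B : 'M[C]_(n, p)) :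
  adjmx (A *m B) = adjmx B *m adjmx A.
Proof. by rewrite /adjmx trmx_mul map_mxM. Qed.

Lemma adjmx_trmx m n (A : 'M[C]_(m, n)) : adjmx A^T = (adjmx A)^T.
Proof. by rewrite /adjmx map_trmx. Qed.

Lemma adjmxK m n (A : 'M[C]_(m, n)) : adjmx (adjmx A) = A.
Proof. by apply/matrixP => i j; rewrite !mxE conjCK. Qed.

Lemma mxtrace_adjmx_mul_ge0 m n (A : 'M[C]_(m, n)) : 0 <= \tr (adjmx A *m A).
Proof.
rewrite /mxtrace; apply: sumr_ge0 => i _; rewrite mxE.
by apply: sumr_ge0 => k _; rewrite !mxE mulrC mul_conjC_ge0.
Qed.

Section OrthogonalProjectors.
Variables (n : nat) (P : 'M[C]_n).
Hypotheses (P_herm : adjmx P = P) (P_idem : P *m P = P).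

(* Tr(P Q) = Tr((P Q)^* (P Q)) since P and Q are Hermitian idempotents. *)
Lemma mxtrace_projector_mul_ge0 (Q : 'M[C]_n) :
  adjmx Q = Q -> Q *m Q = Q -> 0 <= \tr (P *m Q).
Proof.
move=> Q_herm Q_idem.
suff -> : \tr (P *m Q) = \tr (adjmx (P *m Q) *m (P *m Q)).
  exact: mxtrace_adjmx_mul_ge0.
rewrite adjmxM P_herm Q_herm -{1}P_idem -{1}Q_idem mulmxA mxtrace_mulC.
by rewrite !mulmxA.
Qed.

Lemma mxtrace_projector_mul_le1 (Q : 'M[C]_n) :
  \tr P = 1 -> adjmx Q = Q -> Q *m Q = Q -> \tr (P *m Q) <= 1.
Proof.
move=> P_tr Q_herm Q_idem.
have herm_compl : adjmx (1%:M - Q) = 1%:M - Q.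
  by rewrite /adjmx linearB /= trmx1 map_mxB map_mx1 -/(adjmx Q) Q_herm.
have idem_compl : (1%:M - Q) *m (1%:M - Q) = 1%:M - Q.
  by rewrite mulmxBr mulmx1 !mulmxBl mul1mx Q_idem subrr subr0.
have := mxtrace_projector_mul_ge0 herm_compl idem_compl.
by rewrite mulmxBr mulmx1 raddfB /= P_tr subr_ge0.
Qed.

End OrthogonalProjectors.

Lemma rank_one_projector_trace n (P : 'M[C]_n) : rank_one_projector P -> \tr P = 1.
Proof.
case=> _ [P_idem P_rank].
have [u [v Puv]] : exists (u : 'cV[C]_n) (v : 'rV[C]_n), P = u *m v.
  rewrite -(mulmx_base P); move: (col_base P) (row_base P); rewrite P_rank.
  by move=> u v; exists u, v.
set s := (v *m u) 0 0; have vu : v *m u = s%:M by rewrite [LHS]mx11_scalar.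
have P_neq0 : P != 0 by rewrite -mxrank_eq0 P_rank.
have sP : s *: P = P.
  by rewrite -{2}P_idem Puv mulmxA -(mulmxA u) vu mul_mx_scalar -scalemxAl.
have : (s - 1) *: P = 0 by rewrite scalerBl sP scale1r subrr.
move/eqP; rewrite scaler_eq0 (negbTE P_neq0) orbF subr_eq0 => /eqP s1.
by rewrite Puv mxtrace_mulC vu trace_mx11 mxE eqxx s1.
Qed.

Lemma rank_one_projector_trmx n (P : 'M[C]_n) :
  rank_one_projector P -> rank_one_projector P^T.
Proof.
case=> P_herm [P_idem P_rank].
by split; [rewrite adjmx_trmx P_herm | rewrite -trmx_mul P_idem mxrank_tr].
Qed.

Lemma mxtrace_rank_one_projector_mul_bounds n (P Q : 'M[C]_n) :
  rank_one_projector P -> rank_one_projector Q -> 0 <= \tr (P *m Q) <= 1.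
Proof.
move=> rP [Q_herm [Q_idem _]]; have P_tr := rank_one_projector_trace rP.
case: rP => P_herm [P_idem _].
by rewrite mxtrace_projector_mul_ge0 // mxtrace_projector_mul_le1.
Qed.

Definition rho_weight d (eta beta x y : C) : C :=
  1 - eta - beta + d%:R * eta * x + d%:R * beta * y.

Lemma mxtrace_rho_projectors d eta beta (PA PB : 'M[C]_d) : (0 < d)%N ->
  rank_one_projector PA -> rank_one_projector PB ->
  \tr (rho d eta beta *m tens PA PB) =
  rho_weight d eta beta (\tr (PA *m PB)) (\tr (PA^T *m PB)) / d%:R ^+ 2.
Proof.
move=> d_gt0 /rank_one_projector_trace trA /rank_one_projector_trace trB.
rewrite mxtrace_rho_tens trA trB /rho_weight.
by field; rewrite pnatr_eq0 -lt0n.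
Qed.

Lemma local_positive_rho_of_corners d eta beta : (0 < d)%N ->
  0 <= rho_weight d eta beta 0 0 -> 0 <= rho_weight d eta beta 1 0 ->
  0 <= rho_weight d eta beta 0 1 -> 0 <= rho_weight d eta beta 1 1 ->
  local_positive (rho d eta beta).
Proof.
move=> d_gt0 w00 w10 w01 w11 PA PB rA rB.
rewrite mxtrace_rho_projectors // divr_ge0 ?exprn_ge0 ?ler0n //.
move: w00 w10 w01 w11; rewrite /rho_weight !(mulr0, mulr1, addr0) => w00 w10 w01 w11.
apply: affine_ge0_on_unit_square => //.
- exact: mxtrace_rank_one_projector_mul_bounds.
- exact/mxtrace_rank_one_projector_mul_bounds/rB/rank_one_projector_trmx.
Qed.

Definition dotv n (u w : 'cV[C]_n) : C := (adjmx u *m w) 0 0.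

Definition vproj n (u : 'cV[C]_n) : 'M[C]_n := u *m adjmx u.

Lemma vproj_rank_one n (u : 'cV[C]_n) : dotv u u = 1 -> rank_one_projector (vproj u).
Proof.
move=> uu1; have uu : adjmx u *m u = 1%:M by rewrite [LHS]mx11_scalar -/(dotv u u) uu1.
split; first by rewrite /vproj adjmxM adjmxK.
split; first by rewrite /vproj mulmxA -(mulmxA u) uu mulmx1.
apply/eqP; rewrite eqn_leq (leq_trans (mxrankM_maxl _ _) (rank_leq_col _)) /=.
rewrite lt0n mxrank_eq0; apply: contraTneq isT => P0.
have : adjmx u *m vproj u *m u = 0 by rewrite P0 mulmx0 mul0mx.
rewrite mulmxA uu mul1mx uu => /matrixP /(_ 0 0); rewrite !mxE /=.
by move/eqP; rewrite oner_eq0.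
Qed.

Lemma mxtrace_vproj_mul n (u w : 'cV[C]_n) :
  \tr (vproj u *m vproj w) = dotv u w * dotv w u.
Proof.
rewrite /vproj !mulmxA mxtrace_mulC trace_mx11 -mulmxA [adjmx u *m w]mx11_scalar.
by rewrite mul_mx_scalar -scalemxAr mxE mulrC.
Qed.

Lemma trmx_vproj n (u : 'cV[C]_n) : (vproj u)^T = vproj (map_mx Num.conj u).
Proof.
by rewrite /vproj trmx_mul; congr (_ *m _); apply/matrixP => i j; rewrite !mxE ?conjCK.
Qed.

Lemma local_positive_rho_unit_vectors d eta beta (u w : 'cV[C]_d) : (0 < d)%N ->
  local_positive (rho d eta beta) -> dotv u u = 1 -> dotv w w = 1 ->
  let u' := map_mx Num.conj u in
  0 <= rho_weight d eta beta (dotv u w * dotv w u) (dotv u' w * dotv w u').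
Proof.
move=> d_gt0 lp /vproj_rank_one ru /vproj_rank_one rw /=.
have := lp _ _ ru rw; rewrite mxtrace_rho_projectors // trmx_vproj !mxtrace_vproj_mul.
by rewrite pmulr_lge0 // invr_gt0 exprn_gt0 // ltr0n.
Qed.

Section CornerWitnesses.
Variable n : nat.

Let i0 : 'I_n.+2 := ord0.
Let i1 : 'I_n.+2 := lift ord0 ord0.

Lemma i1_neq_i0 : (i1 == i0) = false.
Proof. by rewrite eq_sym (negbTE (neq_lift _ _)). Qed.

Definition vec2 (a b : C) : 'cV[C]_n.+2 :=
  \col_k (if k == i0 then a else if k == i1 then b else 0).

Lemma dotv_vec2 a b a' b' : dotv (vec2 a b) (vec2 a' b') = a^* * a' + b^* * b'.
Proof.
rewrite /dotv mxE (bigD1 i0) // (bigD1 i1) ?i1_neq_i0 //= big1 => [|k /andP[k1 k0]].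
  by rewrite !mxE eqxx i1_neq_i0 eqxx addr0.
by rewrite !mxE (negbTE k0) (negbTE k1) conjC0 mul0r.
Qed.

Lemma conj_vec2 a b : map_mx Num.conj (vec2 a b) = vec2 a^* b^*.
Proof.
apply/matrixP => k j; rewrite !mxE.
by case: (k == i0); case: (k == i1); rewrite ?conjC0.
Qed.

Let e0 := vec2 1 0.
Let e1 := vec2 0 1.

Let a : C := (1 + 'i) / 2.
Let b : C := (1 - 'i) / 2.

Lemma conj_a : a^* = b.
Proof. by rewrite /a /b rmorphM rmorphD fmorphV rmorph1 rmorph_nat -/(Num.conj _) conjCi. Qed.

Lemma conj_b : b^* = a.
Proof. by rewrite -conj_a conjCK. Qed.

Let f := vec2 a b.

Lemma dotv_f : dotv f f = 1.
Proof.
rewrite dotv_vec2 conj_a conj_b /a /b.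
transitivity ((1 - 'i * 'i) / 2 : C); first by field.
by rewrite mulCii opprK; field.
Qed.

Lemma dotv_conj_f_f : dotv (vec2 b a) f = 0.
Proof.
rewrite dotv_vec2 conj_a conj_b /a /b.
transitivity ((1 + 'i * 'i) / 2 : C); first by field.
by rewrite mulCii subrr mul0r.
Qed.

Variables (eta beta : C).
Hypothesis rho_local_positive : local_positive (rho n.+2 eta beta).

Lemma rho_weight_corners_ge0 :
  [/\ 0 <= rho_weight n.+2 eta beta 0 0, 0 <= rho_weight n.+2 eta beta 1 0,
      0 <= rho_weight n.+2 eta beta 0 1 & 0 <= rho_weight n.+2 eta beta 1 1].
Proof.
have unit_e0 : dotv e0 e0 = 1 by rewrite dotv_vec2 conjC1 conjC0 mul1r mul0r addr0.
have unit_e1 : dotv e1 e1 = 1 by rewrite dotv_vec2 conjC1 conjC0 mul1r mul0r add0r.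
have e1_e0 : dotv e1 e0 = 0 by rewrite dotv_vec2 conjC1 conjC0 mul1r !mul0r addr0.
have conj_e0 : map_mx Num.conj e0 = e0 by rewrite conj_vec2 conjC1 conjC0.
have conj_e1 : map_mx Num.conj e1 = e1 by rewrite conj_vec2 conjC1 conjC0.
have conj_f : map_mx Num.conj f = vec2 b a by rewrite conj_vec2 conj_a conj_b.
have conj_f' : map_mx Num.conj (vec2 b a) = f by rewrite conj_vec2 conj_a conj_b.
have unit_f' : dotv (vec2 b a) (vec2 b a) = 1.
  by rewrite -[RHS]dotv_f !dotv_vec2 conj_a conj_b addrC.
have corner u w := @local_positive_rho_unit_vectors n.+2 eta beta u w isT rho_local_positive.
split.
- by have := corner _ _ unit_e1 unit_e0; rewrite /= conj_e1 e1_e0 !mul0r.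
- by have := corner _ _ dotv_f dotv_f; rewrite /= conj_f dotv_conj_f_f dotv_f !mul0r mulr1.
- by have := corner _ _ unit_f' dotv_f; rewrite /= conj_f' dotv_conj_f_f dotv_f !mul0r mulr1.
- by have := corner _ _ unit_e0 unit_e0; rewrite /= conj_e0 unit_e0 mulr1.
Qed.

End CornerWitnesses.

Lemma local_positive_rho_corners n eta beta :
  local_positive (rho n.+2 eta beta) <->
  [/\ 0 <= rho_weight n.+2 eta beta 0 0, 0 <= rho_weight n.+2 eta beta 1 0,
      0 <= rho_weight n.+2 eta beta 0 1 & 0 <= rho_weight n.+2 eta beta 1 1].
Proof.
split; first exact: rho_weight_corners_ge0.
by case; apply: local_positive_rho_of_corners.
Qed.

Lemma rho_conditions_corners d eta beta : (1 < d)%N ->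
  [/\ - 1 / (d%:R - 1) <= eta + beta, eta + beta <= 1,
      - (d%:R - 1) * eta + beta <= 1 & eta - (d%:R - 1) * beta <= 1] <->
  [/\ 0 <= rho_weight d eta beta 0 0, 0 <= rho_weight d eta beta 1 0,
      0 <= rho_weight d eta beta 0 1 & 0 <= rho_weight d eta beta 1 1].
Proof.
move=> d_gt1; have d1_gt0 : 0 < d%:R - 1 :> C by rewrite subr_gt0 ltr1n.
have -> : (- 1 / (d%:R - 1) <= eta + beta) = (0 <= rho_weight d eta beta 1 1).
  by rewrite ler_pdivrMr // -subr_ge0 /rho_weight; congr (0 <= _); ring.
have -> : (eta + beta <= 1) = (0 <= rho_weight d eta beta 0 0).
  by rewrite -subr_ge0 /rho_weight; congr (0 <= _); ring.
have -> : (- (d%:R - 1) * eta + beta <= 1) = (0 <= rho_weight d eta beta 1 0).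
  by rewrite -subr_ge0 /rho_weight; congr (0 <= _); ring.
have -> : (eta - (d%:R - 1) * beta <= 1) = (0 <= rho_weight d eta beta 0 1).
  by rewrite -subr_ge0 /rho_weight; congr (0 <= _); ring.
by split=> -[].
Qed.

End LocalPositivity.

Theorem mainTheorem8 (C : numClosedFieldType) (d : nat) (hd : (2 <= d)%N)
    (eta beta : C) (heta : eta \is Num.real) (hbeta : beta \is Num.real) :
  local_positive (rho d eta beta) <->
  [/\ - 1 / (d%:R - 1) <= eta + beta, eta + beta <= 1,
      - (d%:R - 1) * eta + beta <= 1 & eta - (d%:R - 1) * beta <= 1].
Proof.
case: d hd => [|[|n]] // _.
apply: iff_trans (local_positive_rho_corners n eta beta) _.
by apply: iff_sym; apply: rho_conditions_corners.
Qed.
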